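(* Let $n\ge 1$ and $P\ge 1$ be integers, and set $l_n=\frac{3\cdot 2^{n-1}-1}{2}$. For real $x$ define $$S_n(x)=\sum_{l=2^{n-1}}^{2^{n}-1}\frac{1}{x-(2l-1)\pi i}.$$ Then for every real $x$, $$\left|\,S_n(x)-\sum_{l=2^{n-1}}^{2^{n}-1}\frac{1}{x-(2l_n-1)\pi i}\sum_{\nu=0}^{P-1}\left(\frac{2(l-l_n)\pi i}{x-(2l_n-1)\pi i}\right)^{\nu}\right|\le \frac{1}{2\pi}\cdot\frac{1}{3^{P}}.$$
   Context: Here $i$ denotes the imaginary unit. The sums $S_n$ are the dyadic groups of the pole expansion $\sum_{l\ge1}\frac{1}{x-(2l-1)\pi i}$ of the Fermi–Dirac function: the $n$-th group collects the poles $(2l-1)\pi i$ with $2^{n-1}\le l\le 2^n-1$, and $l_n$ is the midpoint of the index range $[2^{n-1},2^n-1]$. The subtracted double sum is the truncation after $P$ terms of the geometric-series (multipole) expansion of each term of $S_n$ about the pole $(2l_n-1)\pi i$. *)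

From HB Require Import structures.
From mathcomp Require Import all_boot all_order all_algebra.
From mathcomp Require Import reals trigo.
From mathcomp Require Export complex.
Set Implicit Arguments. Unset Strict Implicit. Unset Printing Implicit Defensive.
Import Order.TTheory GRing.Theory Num.Theory.
Local Open Scope ring_scope.
Local Open Scope complex_scope.

Definition l_mid (R : realType) (n : nat) : R :=
  ((3 * 2 ^ n.-1)%:R - 1) / 2.

Definition S_n (R : realType) (n : nat) (x : R) : R[i] :=
  \sum_(2 ^ n.-1 <= l < 2 ^ n)
     (x%:C - ((2 * l%:R - 1) * pi)%:C * 'i)^-1.

Definition S_n_trunc (R : realType) (n P : nat) (x : R) : R[i] :=
  \sum_(2 ^ n.-1 <= l < 2 ^ n)
     (x%:C - ((2 * l_mid R n - 1) * pi)%:C * 'i)^-1 *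
     \sum_(0 <= nu < P)
        ((((2 * (l%:R - l_mid R n)) * pi)%:C * 'i) /
         (x%:C - ((2 * l_mid R n - 1) * pi)%:C * 'i)) ^+ nu.

(* Write a = x - (2 l_n - 1) pi i for the central pole and d = 2 (l - l_n) pi i,
   so that each summand of S_n is 1 / (a - d) and the truncated geometric series
   leaves the exact remainder (d / a)^P / (a - d).  With m = 2^(n-1) the central
   pole has height c pi, c = 3 m - 2, and every pole of the group lies within
   (m - 1) pi <= c pi / 3 of it; hence |d / a| <= 1/3, |a - d| >= (2 m - 1) pi,
   and (d / a)^P <= 3^(1-P) |d / a|.  Summing the distances |2 l - 1 - c|, whose
   total is (m^2 - [m odd]) / 2, gives at most 3^(-P) / (2 pi). *)

From HB Require Import structures.
From mathcomp Require Import all_boot all_order all_algebra.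
From mathcomp Require Import reals trigo.
From mathcomp Require Import complex.
From mathcomp Require Import ring lra.

Set Implicit Arguments. Unset Strict Implicit. Unset Printing Implicit Defensive.
Import Order.TTheory GRing.Theory Num.Theory.
Local Open Scope ring_scope.
Local Open Scope complex_scope.

Lemma abs_le_norm_sub_mulCi (R : rcfType) (x y : R) : `|y|%:C <= `|x%:C - y%:C * 'i|.
Proof.
rewrite -[`|_ - _|]mulr1 -normCi -normrM; apply: le_trans (normc_ge_Re _).
by rewrite ReiNIm /= normrN sub0r normrN mulr1 mulr0 addr0.
Qed.

Lemma geom_trunc_remainder (F : fieldType) (a d : F) (P : nat) :
  a != 0 -> a - d != 0 ->
  (a - d)^-1 - a^-1 * \sum_(0 <= nu < P) (d / a) ^+ nu = (d / a) ^+ P / (a - d).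
Proof.
move=> a_neq0 ad_neq0; set q := d / a.
have a_d : a - d = a * (1 - q) by rewrite mulrBr mulr1 mulrCA divff // mulr1.
have q_neq1 : 1 - q != 0 by move: ad_neq0; rewrite a_d mulf_eq0 negb_or => /andP[].
have geom : \sum_(0 <= nu < P) q ^+ nu = (1 - q ^+ P) / (1 - q).
  by rewrite big_mkord -opprB subrX1 -mulNr opprB mulrAC divff // mul1r.
rewrite a_d geom; field.
by rewrite a_neq0 q_neq1.
Qed.

Lemma norm_real_complex (R : rcfType) (r : R) : `|r%:C| = `|r|%:C.
Proof. by rewrite normc_def /= expr0n addr0 sqrtr_sqr. Qed.

Lemma norm_multipole_remainder (R : rcfType) (x a b : R) (P : nat) :
  0 < a -> 0 < b ->
  `|(x%:C - b%:C * 'i)^-1 - (x%:C - a%:C * 'i)^-1 *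
      \sum_(0 <= nu < P) (((b - a)%:C * 'i) / (x%:C - a%:C * 'i)) ^+ nu|
    <= ((`|b - a| / a) ^+ P / b)%:C.
Proof.
move=> a_gt0 b_gt0.
set A := x%:C - a%:C * 'i; set D := (b - a)%:C * 'i.
have A_ge : a%:C <= `|A| by have := abs_le_norm_sub_mulCi x a; rewrite ger0_norm // ltW.
have AD : x%:C - b%:C * 'i = A - D by rewrite /A /D rmorphB /=; ring.
have AD_ge : b%:C <= `|A - D|.
  by have := abs_le_norm_sub_mulCi x b; rewrite AD ger0_norm // ltW.
have A_gt0 : 0 < `|A| by apply: lt_le_trans A_ge; rewrite ltcR.
have AD_gt0 : 0 < `|A - D| by apply: lt_le_trans AD_ge; rewrite ltcR.
rewrite AD geom_trunc_remainder -?normr_gt0 //.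
rewrite normf_div normrX normf_div normrM normCi mulr1 norm_real_complex.
rewrite rmorphM rmorphV ?unitfE ?gt_eqF // rmorphXn rmorphM rmorphV ?unitfE ?gt_eqF //=.
have inv_le (u v : R[i]) : 0 < u -> u <= v -> v^-1 <= u^-1.
  by move=> u_gt0 uv; rewrite lef_pV2 ?posrE // (lt_le_trans u_gt0 uv).
have ratio_le : `|b - a|%:C / `|A| <= `|b - a|%:C / a%:C.
  by rewrite ler_wpM2l ?ler0c // inv_le // ltcR.
have ratio_ge0 : 0 <= `|b - a|%:C / `|A| by rewrite divr_ge0 // ler0c.
apply: ler_pM; rewrite ?exprn_ge0 ?invr_ge0 ?(ltW AD_gt0) ?inv_le ?ltcR //.
by apply: lerXn2r; rewrite // nnegrE (le_trans ratio_ge0).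
Qed.

Lemma exprn_le_scaled (R : realFieldType) (q r : R) (P : nat) :
  0 < q -> 0 <= r -> q * r <= 1 -> (0 < P)%N -> r ^+ P <= q * r / q ^+ P.
Proof.
move=> q_gt0 r_ge0 qr_le1; case: P => // P _.
have -> : q * r / q ^+ P.+1 = (q ^+ P)^-1 * r.
  by rewrite exprS; field; rewrite expf_neq0 ?gt_eqF.
rewrite exprSr ler_wpM2r //.
rewrite -(ler_pM2l (exprn_gt0 P q_gt0)) mulfV ?expf_neq0 ?gt_eqF //.
by rewrite -exprMn exprn_ile1 // mulr_ge0 // ltW.
Qed.

(* The pole [l = m + k] lies at offset [2 k + 1 - m] from the central one. *)
Definition centred_abs_sum (R : numDomainType) (m : nat) : R :=
  \sum_(k < m) `|2 * k%:R + 1 - m%:R|.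

Lemma centred_abs_sumSS (R : realDomainType) (m : nat) :
  centred_abs_sum R m.+2 = centred_abs_sum R m + 2 * m.+1%:R.
Proof.
rewrite /centred_abs_sum big_ord_recl big_ord_recr /=.
have -> : \sum_(k < m) `|2 * (bump 0 k)%:R + 1 - m.+2%:R| =
          \sum_(k < m) `|2 * k%:R + 1 - m%:R| :> R.
  by apply: eq_bigr => k _; rewrite /bump /= !mulrSr; congr `|_|; ring.
rewrite mulr0 add0r -[m.+2%:R]natr1.
have -> : 1 - (m.+1%:R + 1) = - m.+1%:R :> R by ring.
have -> : 2 * m.+1%:R + 1 - (m.+1%:R + 1) = m.+1%:R :> R by ring.
by rewrite normrN ger0_norm ?ler0n //; ring.
Qed.

Lemma centred_abs_sum_eq (R : realDomainType) (m : nat) :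
  2 * centred_abs_sum R m = m%:R ^+ 2 - (odd m)%:R.
Proof.
suff : 2 * centred_abs_sum R m = m%:R ^+ 2 - (odd m)%:R /\
       2 * centred_abs_sum R m.+1 = m.+1%:R ^+ 2 - (odd m.+1)%:R by case.
elim: m => [|m [IHm IHm1]].
  by rewrite /centred_abs_sum !big_ord0 big_ord1 /= mulr0 add0r subrr normr0; split; ring.
split=> //; rewrite centred_abs_sumSS mulrDr IHm /= negbK -!natr1.
by case: (odd m) => /=; ring.
Qed.

Lemma centred_abs_sum_le (R : realDomainType) (m : nat) : (0 < m)%N ->
  6 * centred_abs_sum R m <= (3 * m%:R - 2) * (2 * m%:R - 1).
Proof.
move=> m_gt0; have := centred_abs_sum_eq R m.
case: (boolP (odd m)) => [_|m_even] /= sum_eq.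
  have := sqr_ge0 (6 * m%:R - 7 : R); nra.
have m_ge2 : 2 <= m%:R :> R.
  by rewrite (ler_nat R 2 m); case: m m_gt0 m_even {sum_eq} => [|[|]].
nra.
Qed.

Section MultipoleGroup.

Variables (R : realType) (m P : nat) (x : R).
Hypotheses (m_gt0 : (0 < m)%N) (P_gt0 : (0 < P)%N).

(* [L] is [l_mid R n] for [m = 2 ^ n.-1], and the central pole is [c * pi]. *)
Local Notation L := (((3 * m)%N%:R - 1) / 2 : R).
Local Notation c := (3 * m%:R - 2 : R).
Local Notation cpi := ((2 * L - 1) * pi).

Definition multipole_error (l : nat) : R[i] :=
  (x%:C - ((2 * l%:R - 1) * pi)%:C * 'i)^-1 - (x%:C - cpi%:C * 'i)^-1 *
    \sum_(0 <= nu < P) (((2 * (l%:R - L) * pi)%:C * 'i) / (x%:C - cpi%:C * 'i)) ^+ nu.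

Lemma multipole_term_error (l : nat) : (m <= l < m.*2)%N ->
  `|multipole_error l|
    <= (3 * (`|2 * l%:R - 1 - c| / c) / 3 ^+ P / ((2 * m%:R - 1) * pi))%:C.
Proof.
rewrite /multipole_error; case/andP=> m_le_l l_lt_2m.
have l_ge : m%:R <= l%:R :> R by rewrite ler_nat.
have l_le : l%:R + 1 <= 2 * m%:R :> R.
  by rewrite natr1 -[2]/(2%:R) -natrM ler_nat mul2n.
have pi_gt0 : 0 < pi :> R := pi_gt0 R.
have cpi_eq : cpi = c * pi by rewrite natrM; congr (_ * _); field.
have d_eq : 2 * (l%:R - L) * pi = (2 * l%:R - 1) * pi - cpi by ring.
have c_gt0 : 0 < c by lra.
have b_gt0 : 0 < (2 * l%:R - 1) * pi :> R by apply: mulr_gt0 => //; lra.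
have cpi_gt0 : 0 < cpi by rewrite cpi_eq mulr_gt0.
rewrite d_eq; apply: le_trans (norm_multipole_remainder x P cpi_gt0 b_gt0) _.
rewrite cpi_eq -mulrBl normrM (gtr0_norm pi_gt0) -mulf_div divff ?gt_eqF // mulr1.
rewrite lecR; set r := `|_| / c.
have r_ge0 : 0 <= r by rewrite divr_ge0 // ltW.
have three_r_le1 : 3 * r <= 1.
  rewrite /r mulrA ler_pdivrMr // mul1r -ler_pdivlMl //.
  by rewrite ler_norml; apply/andP; split; lra.
have m_pi_gt0 : 0 < (2 * m%:R - 1) * pi :> R by apply: mulr_gt0 => //; lra.
apply: ler_pM; rewrite ?exprn_ge0 ?invr_ge0 ?(ltW b_gt0) ?exprn_le_scaled //.
by rewrite lef_pV2 ?posrE // ler_pM2r //; lra.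
Qed.

Lemma multipole_group_error :
  `|\sum_(m <= l < m.*2) multipole_error l| <= (1 / (2 * pi) * (1 / 3 ^+ P))%:C.
Proof.
apply: le_trans (ler_norm_sum _ _ _) _.
rewrite big_nat; apply: le_trans (ler_sum _ multipole_term_error) _.
rewrite -big_nat -rmorph_sum lecR.
have pi_gt0 : 0 < pi :> R := pi_gt0 R.
have m_ge1 : 1 <= m%:R :> R by rewrite ler1n.
have c_gt0 : 0 < c by lra.
have odd_m_gt0 : 0 < 2 * m%:R - 1 :> R by lra.
have -> : \sum_(m <= l < m.*2)
    3 * (`|2 * l%:R - 1 - c| / c) / 3 ^+ P / ((2 * m%:R - 1) * pi)
    = 1 / (2 * pi) * (1 / 3 ^+ P) *
      (6 * centred_abs_sum R m / (c * (2 * m%:R - 1))).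
  rewrite /centred_abs_sum mulr_sumr mulr_suml mulr_sumr -{1}[m]add0n big_addn -addnn addnK.
  (* [field] would unfold [pi]. *)
  rewrite big_mkord; move: pi_gt0; generalize (@pi R) => p p_gt0.
  apply: eq_bigr => k _.
  have -> : 2 * (k + m)%N%:R - 1 - c = 2 * k%:R + 1 - m%:R by rewrite natrD; ring.
  by field; rewrite !gt_eqF ?exprn_gt0.
apply: ler_piMr; first by rewrite mulr_ge0 // divr_ge0 ?exprn_ge0 ?mulr_ge0 // ltW.
by rewrite ler_pdivrMr ?mulr_gt0 // mul1r centred_abs_sum_le.
Qed.

End MultipoleGroup.

Theorem mainTheorem1 (R : realType) (n P : nat) (hn : (1 <= n)%N) (hP : (1 <= P)%N)
  (x : R) :
  `| S_n n x - S_n_trunc n P x | <= ((1 / (2 * pi)) * (1 / 3 ^+ P))%:C.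
Proof.
rewrite /S_n /S_n_trunc -sumrB.
have -> : (2 ^ n = (2 ^ n.-1).*2)%N by rewrite -mul2n -expnS prednK.
exact: (multipole_group_error x (expn_gt0 2 n.-1) hP).
Qed.
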